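(* Let $G=(V,E)$ be an undirected graph with $|V|=p$ and $\sigma$ an ordering of $V$. If the ordered graph $G_\sigma$ satisfies Property-A and Property-B, then $G$ is a Generalized Bartlett graph and $\sigma$ is a Generalized Bartlett ordering for $G$.
   Context: Ordered graph: $G_\sigma$ has vertices $\{1,\dots,p\}$ and edges $E_\sigma=\{(i,j):(\sigma^{-1}(i),\sigma^{-1}(j))\in E\}$. For $\Omega\in\mathbb{P}_{G_\sigma}$ (symmetric positive definite, $\Omega_{ij}=0$ for $i\ne j$, $(i,j)\notin E_\sigma$) write $\Omega=LDL^T$ (modified Cholesky: $L$ unit lower triangular, $D=\mathrm{diag}(D_1,\dots,D_p)$, $D_i>0$), and set $\widetilde D_1=D_1$, $\widetilde D_k=D_k/D_{k-1}$ ($k\ge2$). The entries $L_I=\{L_{ij}:i>j,(i,j)\in E_\sigma\}$ are independent parameters. For $i>j$ with $(i,j)\notin E_\sigma$, $\Omega_{ij}=0$ gives $L_{ij}=-\sum_{k=1}^{j-1}L_{ik}L_{jk}\prod_{l=k+1}^{j}\widetilde D_l^{-1}$; substituting recursively, each such $L_{ij}$ is a polynomial (its expansion, with like terms collected) in the entries of $L_I$ and $\widetilde D_1^{-1},\dots,\widetilde D_p^{-1}$, each term of the form $\pm\prod_{(r,s)}L_{rs}^{c_{rs}}\prod_k\widetilde D_k^{d_k}$ with $c_{rs}\ge0$, $d_k\le0$ integers. $G_\sigma$ has Property-A if for every $i>j$ with $(i,j)\notin E_\sigma$ every exponent $c_{rs}$ in the expansion of $L_{ij}$ lies in $\{0,1\}$;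 it has Property-B if every exponent $d_k$ in the expansion of every such $L_{ij}$ lies in $\{0,-1\}$. Triangulation: $E^\sigma_0=E$, and for $i=1,\dots,p-2$, $E^\sigma_i=E^\sigma_{i-1}\cup\{\{u,v\}:u\ne v,\sigma(u)>i,\sigma(v)>i,\{u,\sigma^{-1}(i)\},\{v,\sigma^{-1}(i)\}\in E^\sigma_{i-1}\}$; $D^\sigma(E)=E^\sigma_{p-2}$. $\sigma$ is a Generalized Bartlett ordering of $G$ if there are no $u,v,w$ with $\{u,v\},\{v,w\},\{u,w\}\notin E$ but all in $D^\sigma(E)$; $G$ is Generalized Bartlett if such an ordering exists. *)

From HB Require Import structures.
From mathcomp Require Import all_boot all_order all_algebra fingroup perm.
From mathcomp Require Import mpoly.
Set Implicit Arguments. Unset Strict Implicit. Unset Printing Implicit Defensive.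
Import GRing.Theory.
Local Open Scope ring_scope.

(* Conventions (0-based): vertices of G are 'I_p; the ordering sigma is a
   permutation of 'I_p, sigma u = position of u (paper's sigma(u) minus 1). *)

Definition simple_graph (p : nat) (e : rel 'I_p) : Prop :=
  ssrbool.irreflexive e /\ ssrbool.symmetric e.

Definition Esig (p : nat) (e : rel 'I_p) (s : {perm 'I_p}) : rel 'I_p :=
  fun i j => e ((s^-1)%g i) ((s^-1)%g j).

(* Polynomial ring: variables indexed by 'I_(p*p+p).
   Variable number i*p+j (i,j < p) stands for L_{ij};
   variable number p*p+l (l < p) stands for Dtilde_l^{-1}.  *)
Definition nvars (p : nat) := (p * p + p)%N.
Notation Poly p := {mpoly int[nvars p]}.

Definition Xn (p k : nat) : Poly p :=
  match @insub nat (fun x => x < nvars p)%N 'I_(nvars p) k with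
  | Some o => 'X_o
  | None => 0
  end.

Definition Lvar (p i j : nat) : Poly p := Xn p (i * p + j)%N.
Definition Tvar (p l : nat) : Poly p := Xn p (p * p + l)%N.

(* Lfun n i j is the polynomial L_{ij} for every column j < n. *)
Fixpoint Lfun (p : nat) (E : nat -> nat -> bool) (n : nat) : nat -> nat -> Poly p :=
  match n with
  | 0 => fun _ _ => 0
  | n'.+1 => fun i j =>
      if (j < n')%N then Lfun p E n' i j
      else if (j == n')%N then
        if (i == j)%N then 1
        else if (i < j)%N then 0
        else if E i j then Lvar p i j
        else - \sum_(0 <= k < j)
                 (Lfun p E n' i k * Lfun p E n' j k *
                  \prod_(k.+1 <= l < j.+1) Tvar p l)
      else 0
  end.

Definition EsigN (p : nat) (e : rel 'I_p) (s : {perm 'I_p}) (i j : nat) : bool :=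
  match @insub nat (fun x => x < p)%N 'I_p i, @insub nat (fun x => x < p)%N 'I_p j with
  | Some oi, Some oj => Esig e s oi oj
  | _, _ => false
  end.

(* The entry L_{ij} (i > j) of the modified Cholesky factor, as a polynomial
   in the free entries L_I and Dtilde_1^{-1},...,Dtilde_p^{-1}, obtained by
   recursive substitution of the zero constraints, with like terms collected. *)
Definition Lpoly (p : nat) (e : rel 'I_p) (s : {perm 'I_p}) (i j : nat) : Poly p :=
  Lfun p (EsigN e s) j.+1 i j.

Definition PropertyA (p : nat) (e : rel 'I_p) (s : {perm 'I_p}) : Prop :=
  forall i j : 'I_p, (j < i)%N -> ~~ Esig e s i j ->
    forall m : 'X_{1..nvars p}, m \in msupp (Lpoly e s i j) ->
      forall k : 'I_(nvars p), (k < p * p)%N -> (m k <= 1)%N.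

Definition PropertyB (p : nat) (e : rel 'I_p) (s : {perm 'I_p}) : Prop :=
  forall i j : 'I_p, (j < i)%N -> ~~ Esig e s i j ->
    forall m : 'X_{1..nvars p}, m \in msupp (Lpoly e s i j) ->
      forall k : 'I_(nvars p), (p * p <= k)%N -> (m k <= 1)%N.

(* Triangulation: fill n = E^sigma_n (steps n = 1..p-2 eliminate the vertex
   at 0-based position n-1). *)
Fixpoint fill (p : nat) (e : rel 'I_p) (s : {perm 'I_p}) (n : nat) : rel 'I_p :=
  match n with
  | 0 => e
  | n'.+1 => fun u v =>
      fill e s n' u v ||
      [&& u != v, (n' < s u)%N, (n' < s v)%N &
          [exists w, [&& (nat_of_ord (s w) == n'), fill e s n' u w & fill e s n' v w]]]
  end.

Definition Dsig (p : nat) (e : rel 'I_p) (s : {perm 'I_p}) : rel 'I_p :=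
  fill e s (p - 2).

Definition GB_ordering (p : nat) (e : rel 'I_p) (s : {perm 'I_p}) : Prop :=
  ~ exists u v w : 'I_p,
      [/\ ~~ e u v, ~~ e v w & ~~ e u w] /\ [/\ Dsig e s u v, Dsig e s v w & Dsig e s u w].

Definition GB_graph (p : nat) (e : rel 'I_p) : Prop :=
  exists s : {perm 'I_p}, GB_ordering e s.

From mathcomp Require Import all_boot all_order all_algebra fingroup perm.
From mathcomp Require Import mpoly.
From mathcomp Require Import zify.
Set Implicit Arguments. Unset Strict Implicit. Unset Printing Implicit Defensive.
Import Order.TTheory GRing.Theory Num.Theory.
Local Open Scope ring_scope.

(* Evaluate the polynomials L_{ij} at L_I = -1, Dtilde_a^{-1} = N and
   Dtilde_l^{-1} = 1 for l <> a. Then -L_{ij} is 1 on an edge and otherwise a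
   sum of nonnegative products over the earlier columns, so every edge of the
   triangulation D^sigma(E) gets value >= 1, and a fill-in edge {u, v} gets
   value >= N when a is the position of v: the vertex eliminated to create it
   comes before v and contributes the factor Dtilde_a^{-1}. If z < y < x were
   pairwise non-adjacent in G but pairwise adjacent in D^sigma(E), then for
   a = position of z the value of -L_{xy} would be at least N^2, whereas by
   Property-B it is affine in Dtilde_a^{-1}, hence O(N). *)

Lemma meval_norm_le_linear (R : realDomainType) (n : nat) (P : {mpoly R[n]})
    (v : 'I_n -> R) (a : 'I_n) (N : R) :
  1 <= N -> `|v a| <= N -> (forall k, k != a -> `|v k| <= 1) ->
  (forall m, m \in msupp P -> (m a <= 1)%N) ->
  `|P.@[v]| <= (\sum_(m <- msupp P) `|P@_m|) * N.
Proof.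
move=> N_ge1 va_le vk_le1 deg_a_le1.
rewrite mevalE; apply: le_trans (ler_norm_sum _ _ _) _.
rewrite mulr_suml !big_seq; apply: ler_sum => m /deg_a_le1 ma_le1.
rewrite normrM ler_wpM2l // normr_prod (bigD1 a) //= normrX.
have rest_le1 : \prod_(k | k != a) `|v k ^+ m k| <= 1.
  apply: prodr_ile1 => k /vk_le1 vk; rewrite normrX exprn_ge0 //=.
  by rewrite exprn_ile1.
have va_pow_le : `|v a| ^+ m a <= N.
  by case: (m a) ma_le1 => [|[|//]] _; rewrite ?expr0 ?expr1.
rewrite -[N]mulr1 ler_pM //; first by rewrite exprn_ge0.
by apply: prodr_ge0 => k _.
Qed.

Lemma Lfun_stable (p : nat) (E : nat -> nat -> bool) (n i j : nat) :
  (j < n)%N -> Lfun p E n i j = Lfun p E j.+1 i j.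
Proof.
elim: n => [//|n IH] lt_jn.
have [lt_jn'|ge_jn] := ltnP j n; first by rewrite /= lt_jn' IH.
by have -> : j = n by apply/eqP; rewrite eqn_leq ge_jn -ltnS lt_jn.
Qed.

Lemma Xn_ord (p k : nat) (lt_k : (k < nvars p)%N) : Xn p k = 'X_(Ordinal lt_k).
Proof. by rewrite /Xn insubT. Qed.

Section CholeskyEntries.

Variables (p : nat) (e : rel 'I_p) (s : {perm 'I_p}).

Lemma Lpoly_rec (i j : nat) : (j < i)%N ->
  Lpoly e s i j = if EsigN e s i j then Lvar p i j else
    - \sum_(0 <= k < j) (Lpoly e s i k * Lpoly e s j k *
                         \prod_(k.+1 <= l < j.+1) Tvar p l).
Proof.
move=> lt_ji; rewrite /Lpoly /= ltnn eqxx (gtn_eqF lt_ji) ltnNge (ltnW lt_ji) /=.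
case: (EsigN e s i j) => //; congr (- _).
by apply: eq_big_nat => k /andP [_ lt_kj]; rewrite !(Lfun_stable _ _ _ lt_kj).
Qed.

Lemma EsigN_perm (u v : 'I_p) : EsigN e s (s u) (s v) = e u v.
Proof.
rewrite /EsigN (insubT (fun x => x < p)%N (ltn_ord (s u))).
rewrite (insubT (fun x => x < p)%N (ltn_ord (s v))) /Esig.
have sub_s w : Sub (val (s w)) (ltn_ord (s w)) = s w by apply: val_inj.
by rewrite !sub_s !permK.
Qed.

Lemma fill_nonedge_witness (n : nat) (u v : 'I_p) :
  fill e s n u v -> ~~ e u v ->
  exists w, [/\ (s w < s u)%N, (s w < s v)%N, fill e s n u w & fill e s n v w].
Proof.
elim: n u v => [|n IH] u v /=; first by move=> ->.
case/orP => [/IH {}IH /IH [w [lt_wu lt_wv f_uw f_vw]] | ].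
  by exists w; rewrite f_uw f_vw.
case/and4P=> _ lt_nu lt_nv /existsP [w /and3P [/eqP sw_n f_uw f_vw]] _.
by exists w; rewrite sw_n f_uw f_vw.
Qed.

Section Weights.

Variables (a : nat) (N : int).
Hypothesis N_ge1 : 1 <= N.

Definition spike (k : nat) : int :=
  if (k < p * p)%N then -1 else if k == (p * p + a)%N then N else 1.

Definition weight (i j : nat) : int :=
  - (Lpoly e s i j).@[fun k : 'I_(nvars p) => spike k].

Definition weight_summand (i j k : nat) : int :=
  weight i k * weight j k * \prod_(k.+1 <= l < j.+1) spike (p * p + l).

Lemma weight_rec (i j : nat) : (j < i < p)%N ->
  weight i j = if EsigN e s i j then 1 else
    \sum_(0 <= k < j) weight_summand i j k.
Proof.
case/andP=> lt_ji lt_ip; rewrite /weight Lpoly_rec //.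
case: (EsigN e s i j).
  have lt_ij : (i * p + j < nvars p)%N by rewrite /nvars; nia.
  rewrite /Lvar Xn_ord mevalXU /spike /=.
  by have -> : (i * p + j < p * p)%N by nia.
rewrite mevalN opprK rmorph_sum /=; apply: eq_big_nat => k /andP [_ lt_kj].
rewrite /weight_summand !rmorphM /= mulrNN rmorph_prod /=; congr (_ * _).
apply: eq_big_nat => l /andP [_ lt_lj].
have lt_l : (p * p + l < nvars p)%N by rewrite /nvars; lia.
by rewrite /Tvar Xn_ord mevalXU.
Qed.

Lemma spike_ge1 (l : nat) : 1 <= spike (p * p + l).
Proof. by rewrite /spike ltnNge leq_addr /=; case: ifP. Qed.

Lemma prod_spike_ge1 (m n : nat) : 1 <= \prod_(m <= l < n) spike (p * p + l).
Proof.
apply: (big_ind (fun x : int => 1 <= x)) => //; first exact: mulr_ege1.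
by move=> l _; apply: spike_ge1.
Qed.

Lemma weight_ge0 (j i : nat) : (j < i < p)%N -> 0 <= weight i j.
Proof.
elim/ltn_ind: j i => j IH i lt_jip; rewrite weight_rec //.
case: (EsigN e s i j) => //; rewrite big_mkord; apply: sumr_ge0 => -[k lt_kj] _.
rewrite /weight_summand /= !mulr_ge0 ?IH //; try lia.
exact: le_trans ler01 (prod_spike_ge1 _ _).
Qed.

Lemma weight_summand_ge0 (i j k : nat) : (k < j < i)%N -> (i < p)%N ->
  0 <= weight_summand i j k.
Proof.
move=> lt_kji lt_ip; rewrite /weight_summand !mulr_ge0 ?weight_ge0 //; try lia.
exact: le_trans ler01 (prod_spike_ge1 _ _).
Qed.

Lemma weight_summand_le (i j k : nat) : (k < j < i)%N -> (i < p)%N ->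
  ~~ EsigN e s i j -> weight_summand i j k <= weight i j.
Proof.
move=> lt_kji lt_ip nE; rewrite weight_rec; last by lia.
rewrite (negbTE nE) big_mkord.
have lt_kj : (k < j)%N by lia.
rewrite (bigD1 (Ordinal lt_kj)) //= lerDl; apply: sumr_ge0 => -[k' lt_k'j] _.
apply: weight_summand_ge0 => //=; lia.
Qed.

Lemma weight_fill_ge1 (n : nat) (u v : 'I_p) :
  fill e s n u v -> (s v < s u)%N -> 1 <= weight (s u) (s v).
Proof.
move: u; have [j] := ubnP (s v); elim: j v => // j IH v; rewrite ltnS => le_vj u.
move=> f_uv lt_vu; have [e_uv|ne_uv] := boolP (e u v).
  by rewrite weight_rec ?ltn_ord ?lt_vu // EsigN_perm e_uv.
have [w [lt_wu lt_wv f_uw f_vw]] := fill_nonedge_witness f_uv ne_uv.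
apply: le_trans (weight_summand_le (k := s w) _ _ _);
  rewrite ?EsigN_perm ?lt_wv ?ltn_ord //.
by rewrite /weight_summand !mulr_ege1 ?prod_spike_ge1 ?(IH w) //; lia.
Qed.

Lemma weight_fill_nonedge_ge (n : nat) (u v : 'I_p) :
  fill e s n u v -> (s v < s u)%N -> ~~ e u v -> val (s v) = a ->
  N <= weight (s u) (s v).
Proof.
move=> f_uv lt_vu ne_uv sv_a.
have [w [lt_wu lt_wv f_uw f_vw]] := fill_nonedge_witness f_uv ne_uv.
apply: le_trans (weight_summand_le (k := s w) _ _ _);
  rewrite ?EsigN_perm ?lt_wv ?ltn_ord //.
have spike_v : spike (p * p + s v) = N by rewrite /spike ltnNge leq_addr sv_a eqxx.
rewrite /weight_summand big_nat_recr //= spike_v.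
have W_ge1 := mulr_ege1 (weight_fill_ge1 f_uw lt_wu) (weight_fill_ge1 f_vw lt_wv).
have P_ge1 := prod_spike_ge1 (s w).+1 (s v).
rewrite mulrA; apply: ler_peMl; first exact: le_trans ler01 N_ge1.
exact: mulr_ege1.
Qed.

End Weights.

End CholeskyEntries.

Section FillIn.

Variables (p : nat) (e : rel 'I_p) (s : {perm 'I_p}).

Definition fillin (n : nat) (u v : 'I_p) : bool := ~~ e u v && fill e s n u v.

Lemma no_sorted_fillin_triangle (n : nat) (x y z : 'I_p) : PropertyB e s ->
  (s z < s y < s x)%N -> fillin n x y -> fillin n y z -> fillin n x z -> False.
Proof.
move=> hB /andP [lt_zy lt_yx] /andP [ne_xy _] /andP [ne_yz f_yz] /andP [ne_xz f_xz].
set P := Lpoly e s (s x) (s y); set S := \sum_(m <- msupp P) `|P@_m|.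
have S_ge0 : 0 <= S by apply: sumr_ge0.
pose N := S + 1; have N_ge1 : 1 <= N by rewrite lerDr.
have N_ge0 : 0 <= N := le_trans ler01 N_ge1.
have nE_xy : ~~ EsigN e s (s x) (s y) by rewrite EsigN_perm.
have upper : weight e s (s z) N (s x) (s y) <= S * N.
  have lt_a : (p * p + s z < nvars p)%N by rewrite /nvars ltn_add2l.
  apply: le_trans (ler_norm _) _; rewrite normrN.
  apply: (meval_norm_le_linear (a := Ordinal lt_a)) => //.
  - by rewrite /spike /= ltnNge leq_addr eqxx ger0_norm.
  - move=> k ne_ka; rewrite /spike; case: ifP => _; first by rewrite normrN normr1.
    rewrite ifF ?normr1 //; apply: contraNF ne_ka => /eqP k_a; exact/eqP/val_inj.
  - move=> m m_P; apply: hB lt_yx _ m m_P (Ordinal lt_a) (leq_addr _ _).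
    by rewrite /Esig !permK.
have lower : N * N <= weight e s (s z) N (s x) (s y).
  apply: le_trans (weight_summand_le (s z) N_ge1 (k := s z) _ _ nE_xy);
    rewrite ?lt_zy ?ltn_ord //.
  have W_xz := weight_fill_nonedge_ge N_ge1 f_xz (ltn_trans lt_zy lt_yx) ne_xz erefl.
  have W_yz := weight_fill_nonedge_ge N_ge1 f_yz lt_zy ne_yz erefl.
  apply: le_trans (ler_peMr _ (prod_spike_ge1 p (s z) N_ge1 _ _)).
    exact: (ler_pM N_ge0 N_ge0 W_xz W_yz).
  exact: (mulr_ge0 (le_trans N_ge0 W_xz) (le_trans N_ge0 W_yz)).
have := le_trans lower upper; rewrite ler_pM2r ?(lt_le_trans ltr01 N_ge1) //.
rewrite /N; lia.
Qed.

Hypothesis e_irr : ssrbool.irreflexive e.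
Hypothesis e_sym : ssrbool.symmetric e.

Lemma fill_sym (n : nat) (u v : 'I_p) : fill e s n u v = fill e s n v u.
Proof.
elim: n u v => [|n IH] u v /=; first exact: e_sym.
rewrite IH eq_sym; congr (_ || _).
case: (v != u); case: (n < s u)%N; case: (n < s v)%N => //=.
by apply/existsP/existsP => -[w /and3P [sw_n f_uw f_vw]]; exists w; rewrite sw_n f_uw f_vw.
Qed.

Lemma fill_irr (n : nat) (u : 'I_p) : fill e s n u u = false.
Proof. by elim: n => [|n IH] /=; rewrite ?e_irr ?IH ?eqxx. Qed.

Lemma fillin_sym (n : nat) (u v : 'I_p) : fillin n u v = fillin n v u.
Proof. by rewrite /fillin e_sym fill_sym. Qed.

Lemma fillin_neq (n : nat) (u v : 'I_p) : fillin n u v -> (s u != s v :> nat).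
Proof.
case/andP=> _; apply: contraTN => /eqP/val_inj/perm_inj ->.
by rewrite fill_irr.
Qed.

Lemma no_fillin_triangle_over_min (n : nat) (x y z : 'I_p) : PropertyB e s ->
  (s z < s x)%N -> (s z < s y)%N ->
  fillin n x y -> fillin n y z -> fillin n x z -> False.
Proof.
move=> hB lt_zx lt_zy f_xy f_yz f_xz.
have [lt_xy|lt_yx|eq_xy] := ltngtP (s x) (s y).
- by apply: (no_sorted_fillin_triangle hB _ _ f_xz f_yz); rewrite ?lt_zx // fillin_sym.
- by apply: (no_sorted_fillin_triangle hB _ f_xy f_yz f_xz); rewrite lt_zy.
- by move: (fillin_neq f_xy); rewrite eq_xy eqxx.
Qed.

Lemma no_fillin_triangle (n : nat) (u v w : 'I_p) : PropertyB e s ->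
  fillin n u v -> fillin n v w -> fillin n u w -> False.
Proof.
move=> hB f_uv f_vw f_uw.
have f_vu : fillin n v u by rewrite fillin_sym.
have f_wv : fillin n w v by rewrite fillin_sym.
have f_wu : fillin n w u by rewrite fillin_sym.
have [lt_wu|le_uw] := ltnP (s w) (s u).
  have [lt_wv|le_vw] := ltnP (s w) (s v).
    exact: (no_fillin_triangle_over_min hB lt_wu lt_wv f_uv f_vw f_uw).
  have lt_vw : (s v < s w)%N by rewrite ltn_neqAle (fillin_neq f_vw) le_vw.
  exact: (no_fillin_triangle_over_min hB (ltn_trans lt_vw lt_wu) lt_vw f_uw f_wv f_uv).
have lt_uw : (s u < s w)%N by rewrite ltn_neqAle (fillin_neq f_uw) le_uw.
have [lt_uv|lt_vu|eq_uv] := ltngtP (s u) (s v).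
- exact: (no_fillin_triangle_over_min hB lt_uv lt_uw f_vw f_wu f_vu).
- have lt_vw : (s v < s w)%N := ltn_trans lt_vu lt_uw.
  exact: (no_fillin_triangle_over_min hB lt_vu lt_vw f_uw f_wv f_uv).
- by move: (fillin_neq f_uv); rewrite eq_uv eqxx.
Qed.

End FillIn.

Theorem theorem4 (p : nat) (e : rel 'I_p) (s : {perm 'I_p}) :
  simple_graph e ->
  PropertyA e s -> PropertyB e s ->
  GB_graph e /\ GB_ordering e s.
Proof.
move=> [e_irr e_sym] _ hB.
suff GB_s : GB_ordering e s by split => //; exists s.
move=> [u [v [w [[ne_uv ne_vw ne_uw] [d_uv d_vw d_uw]]]]].
by apply: (no_fillin_triangle e_irr e_sym hB (n := p - 2) (u := u) (v := v) (w := w));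
  apply/andP.
Qed.
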